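(* Let $\underline{Q}$ be a lower transition rate operator. Then for any $t>0$, any $x\in\mathcal{X}$ and any $A\subseteq\mathcal{X}$: \begin{equation*} \underline{T}_t\mathbb{I}_{A}(x)>0 ~~\Leftrightarrow~~ A\text{ is lower reachable from }x. \end{equation*}
   Context: $\mathcal{X}$ is a finite state space and $\mathcal{L}(\mathcal{X})$ is the set of real-valued functions on $\mathcal{X}$; $\mathbb{I}_S$ denotes the indicator of $S\subseteq\mathcal{X}$ (and $\mathbb{I}_x\coloneqq\mathbb{I}_{\{x\}}$), and $\mathbb{N}_0\coloneqq\mathbb{N}\cup\{0\}$. A lower transition rate operator is a map $\underline{Q}\colon\mathcal{L}(\mathcal{X})\to\mathcal{L}(\mathcal{X})$ such that for all $f,g\in\mathcal{L}(\mathcal{X})$, $\lambda\geq0$, $\mu\in\mathbb{R}$ and $x,y\in\mathcal{X}$: $\underline{Q}(\mu)=0$; $\underline{Q}(f+g)\geq\underline{Q}(f)+\underline{Q}(g)$; $\underline{Q}(\lambda f)=\lambda\underline{Q}(f)$; and $x\neq y\Rightarrow\underline{Q}(\mathbb{I}_y)(x)\geq0$. For each $t\geq0$, $\underline{T}_t$ is defined for every $f$ by the (uniquely solvable) differential equation $\frac{d}{dt}\underline{T}_tf=\underline{Q}\,\underline{T}_tf$ for all $t\geq0$ with $\underline{T}_0f=f$. Lower reachability: $A$ is lower reachable from $x$ if $x\in A_n$, where $A_0\coloneqq A$, $A_{k+1}\coloneqq A_k\cup\{y\in\mathcal{X}\setminus A_k\colon\underline{Q}(\mathbb{I}_{A_k})(y)>0\}$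 for $k\in\mathbb{N}_0$, and $n$ is the first index with $A_n=A_{n+1}$. *)

From HB Require Import structures.
From mathcomp Require Import all_boot all_order all_algebra.
From mathcomp Require Import all_classical all_reals topology normedtype.
Set Implicit Arguments. Unset Strict Implicit. Unset Printing Implicit Defensive.
Import Order.TTheory GRing.Theory Num.Theory.
Import numFieldNormedType.Exports.
Local Open Scope ring_scope.
Local Open Scope classical_set_scope.

Section Defs.
Variables (R : realType) (X : finType).

Definition indic (A : {set X}) : X -> R := fun y => if y \in A then 1 else 0.

Definition lower_rate_op (Q : (X -> R) -> (X -> R)) : Prop :=
  [/\ (forall mu : R, Q (fun _ => mu) = (fun _ => 0)),
      (forall f g : X -> R, forall y, Q f y + Q g y <= Q (fun z => f z + g z) y),
      (forall (lam : R) (f : X -> R), 0 <= lam ->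
          Q (fun z => lam * f z) = (fun y => lam * Q f y)) &
      (forall x y : X, x != y -> 0 <= Q (indic [set y]) x)].

(* T (the family t |-> T_t) solves d/dt T_t f = Q (T_t f) for all t >= 0
   (one-sided derivative at t = 0, derivative taken componentwise, which
   is the same as in the finite-dimensional space L(X)), with T_0 f = f. *)
Definition solves_semigroup_ode (Q : (X -> R) -> (X -> R))
    (T : R -> (X -> R) -> (X -> R)) : Prop :=
  forall f : X -> R,
    T 0 f = f /\
    forall t : R, 0 <= t -> forall x : X,
      (fun h : R => h^-1 * (T (t + h) f x - T t f x))
        @ within (fun h : R => 0 <= t + h) (dnbhs (0 : R))
        --> Q (T t f) x.

Fixpoint reach_seq (Q : (X -> R) -> (X -> R)) (A : {set X}) (k : nat)
    : {set X} :=
  match k with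
  | 0 => A
  | k'.+1 => let Ak := reach_seq Q A k' in
             Ak :|: [set y | (y \notin Ak) && (0 < Q (indic Ak) y)]
  end.

Definition lower_reachable (Q : (X -> R) -> (X -> R)) (A : {set X}) (x : X)
    : Prop :=
  exists n : nat,
    [/\ reach_seq Q A n = reach_seq Q A n.+1,
        (forall m : nat, (m < n)%N -> reach_seq Q A m <> reach_seq Q A m.+1) &
        x \in reach_seq Q A n].

End Defs.

(* Both directions are comparison arguments for the equation u' = Q u.  If
   u' <= Q u, v' >= Q v and u_0 <= v_0, then u <= v: at a point y where u_t - v_t
   attains a positive maximum, superadditivity of Q together with the sign of
   its off-diagonal rates gives Q u_t y <= Q v_t y, and a real induction turns
   this into a maximum principle.
   If x lies outside the stable set B = A_n, no state outside B has a positive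
   rate into B, so Q I_B <= 0; the constant I_B is then a supersolution, and
   T_t I_A <= I_B vanishes at x.
   If x lies in A_n, let c bound the rates -Q I_B y from above and d be the
   least positive rate Q I_B y with y outside B.  Then
     w_s = e^(-(c+d)s) * sum_(k <= n) (d s)^k / k! * I_(A_k)
   is a subsolution with w_0 = I_A, because every state entering A_(k+1) does
   so at rate at least d; hence T_t I_A x >= w_t x > 0. *)

From HB Require Import structures.
From mathcomp Require Import all_boot all_order all_algebra.
From mathcomp Require Import all_classical all_reals topology normedtype.
From mathcomp Require Import derive realfun sequences exp.
From mathcomp Require Import ring lra.
Set Implicit Arguments. Unset Strict Implicit. Unset Printing Implicit Defensive.
Import Order.TTheory GRing.Theory Num.Theory.
Import numFieldNormedType.Exports.
Local Open Scope ring_scope.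
Local Open Scope classical_set_scope.

Section Indicator.
Variables (R : realType) (X : finType).
Implicit Types (A B : {set X}) (f : X -> R).

Lemma indic_ge0 A z : 0 <= indic R A z.
Proof. by rewrite /indic; case: ifP. Qed.

Lemma indic_subset A B z : (A \subset B)%SET -> indic R A z <= indic R B z.
Proof.
move=> /fintype.subsetP AB; rewrite /indic.
by case: ifP => [/AB ->|_] //; case: ifP.
Qed.

Lemma indic_add_setC B : (fun z => indic R B z + indic R (~: B)%SET z) = (fun _ => 1).
Proof.
by apply: funext => z; rewrite /indic finset.in_setC; case: (z \in B); rewrite ?addr0 ?add0r.
Qed.

Lemma sum_indic1 f : f = (fun z => \sum_(y : X) f y * indic R [set y]%SET z).
Proof.
apply: funext => z; rewrite (bigD1 z) //= /indic finset.in_set1 eqxx mulr1 big1 ?addr0 //.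
by move=> y; rewrite finset.in_set1 eq_sym => /negbTE ->; rewrite mulr0.
Qed.

End Indicator.

Section LowerRateOperator.
Variables (R : realType) (X : finType) (Q : (X -> R) -> X -> R).
Hypothesis HQ : lower_rate_op Q.
Implicit Types (f g : X -> R) (y : X).

Lemma lrate_cst (m : R) y : Q (fun _ => m) y = 0.
Proof. by case: HQ => H _ _ _; rewrite H. Qed.

Lemma lrate_superadd f g y : Q f y + Q g y <= Q (fun z => f z + g z) y.
Proof. by case: HQ => _ H _ _; apply: H. Qed.

Lemma lrate_scale (lam : R) f y : 0 <= lam -> Q (fun z => lam * f z) y = lam * Q f y.
Proof. by case: HQ => _ _ H _ /H ->. Qed.

Lemma lrate_indic1_ge0 x y : x != y -> 0 <= Q (indic R [set y]%SET) x.
Proof. by case: HQ => _ _ _; apply. Qed.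

Lemma lrate_sum (I : Type) (r : seq I) (F : I -> X -> R) y :
  \sum_(i <- r) Q (F i) y <= Q (fun z => \sum_(i <- r) F i z) y.
Proof.
elim: r => [|i r IHr].
  rewrite big_nil (_ : (fun z => _) = (fun _ => 0)) ?lrate_cst //.
  by apply: funext => z; rewrite big_nil.
rewrite big_cons (_ : (fun z => _) = (fun z => F i z + \sum_(j <- r) F j z)).
  by apply: le_trans (lrate_superadd _ _ _); rewrite lerD2l.
by apply: funext => z; rewrite big_cons.
Qed.

Lemma lrate_ge0_at_zero f y : (forall z, 0 <= f z) -> f y = 0 -> 0 <= Q f y.
Proof.
move=> f_ge0 fy0; rewrite [f]sum_indic1; apply: le_trans (lrate_sum _ _ _).
apply: sumr_ge0 => z _; rewrite lrate_scale //.
have [->|zy] := eqVneq z y; first by rewrite fy0 mul0r.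
by rewrite mulr_ge0 // lrate_indic1_ge0 // eq_sym.
Qed.

Lemma lrate_shift f (m : R) y : Q (fun z => f z + m) y = Q f y.
Proof.
apply/eqP; rewrite eq_le; apply/andP; split; last first.
  by have := lrate_superadd f (fun _ => m) y; rewrite lrate_cst addr0.
have := lrate_superadd (fun z => f z + m) (fun _ => - m) y.
by under [X in _ <= Q X y]eq_fun do rewrite addrK; rewrite lrate_cst addr0.
Qed.

Lemma lrate_le_at_contact f g y :
  (forall z, f z <= g z) -> f y = g y -> Q f y <= Q g y.
Proof.
move=> fg fgy; have -> : g = (fun z => f z + (g z - f z)).
  by apply: funext => z; rewrite addrC subrK.
apply: le_trans (lrate_superadd _ _ _); rewrite lerDl.
by apply: lrate_ge0_at_zero => [z|]; rewrite ?subr_ge0 ?fgy ?subrr.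
Qed.

Lemma lrate_le_at_max f g y :
  (forall z, f z - g z <= f y - g y) -> Q f y <= Q g y.
Proof.
move=> fg; rewrite -(lrate_shift g (f y - g y)).
by apply: lrate_le_at_contact => [z|]; rewrite ?subrKC //; have := fg z; lra.
Qed.

Lemma lrate_indic_le0 (B : {set X}) :
  (forall y, y \notin B -> Q (indic R B) y <= 0) -> forall z, Q (indic R B) z <= 0.
Proof.
move=> QB z; have [zB|] := boolP (z \in B); last exact: QB.
have := lrate_superadd (indic R B) (indic R (~: B)%SET) z.
rewrite indic_add_setC lrate_cst.
have : 0 <= Q (indic R (~: B)%SET) z.
  apply: lrate_ge0_at_zero => [y|]; first exact: indic_ge0.
  by rewrite /indic finset.in_setC zB.
lra.
Qed.

End LowerRateOperator.

Section RealInduction.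
Variable R : realType.

Lemma real_induction (P : R -> Prop) (a b : R) : a <= b -> P a ->
  (forall s, a <= s -> s < b -> P s ->
     exists2 e : R, 0 < e & forall h : R, 0 < h -> h < e -> P (s + h)) ->
  (forall s, a < s -> s <= b -> (forall u, a <= u -> u < s -> P u) -> P s) ->
  P b.
Proof.
move=> ab Pa right left.
pose S := [set t | a <= t <= b /\ forall u, a <= u -> u <= t -> P u].
have Sa : S a.
  split; first by rewrite lexx ab.
  by move=> u au ua; have -> : u = a by apply/eqP; rewrite eq_le ua au.
have supS : has_sup S by split; [exists a | exists b => t [/andP[]]].
have Sm_ub := sup_upper_bound supS.
set m := sup S in Sm_ub *.
have am : a <= m by apply: Sm_ub.
have mb : m <= b by apply: ge_sup; [exists a | move=> t [/andP[]]].
have below_m u : a <= u -> u < m -> P u.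
  move=> au um; have mu0 : 0 < m - u by rewrite subr_gt0.
  have [t [_ St] ut] := @sup_adherent _ S (m - u) mu0 supS.
  by apply: St => //; rewrite /m in ut; lra.
have Pm : P m.
  have [<-|am'] := eqVneq a m; first exact: Pa.
  by apply: left => //; rewrite lt_neqAle am' am.
have [mb'|] := ltP m b; last by move=> bm; have -> : b = m by apply/eqP; rewrite eq_le mb bm.
have [e e0 Pe] := right m am mb' Pm.
pose t := Num.min (m + e / 2) b.
have St : S t.
  split.
    by rewrite ge_min lexx orbT andbT le_min ab andbT; lra.
  move=> u au ut; have [um|mu] := ltP u m; first exact: below_m.
  have [<-|mu'] := eqVneq m u; first exact: Pm.
  have -> : u = m + (u - m) by ring.
  apply: Pe; first by rewrite subr_gt0 lt_neqAle mu' mu.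
  by move: ut; rewrite /t le_min => /andP[+ _]; lra.
by have := Sm_ub _ St; rewrite /t ge_min => /orP[]; lra.
Qed.

End RealInduction.

Section FiniteBounds.
Variables (R : realType) (I : finType).

Lemma finite_lower_bound (f : I -> R) : exists c : R, forall i, - c <= f i.
Proof. by exists (\big[Num.max/0]_i - f i) => i; rewrite lerNl le_bigmax. Qed.

Lemma finite_pos_lower_bound (P : pred I) (f : I -> R) :
  (forall i, P i -> 0 < f i) -> exists2 d : R, 0 < d & forall i, P i -> d <= f i.
Proof.
move=> f_gt0; exists (\big[Num.min/1]_(i | P i) f i); last by move=> i; exact: bigmin_le_cond.
elim/big_ind: _ => [//|a b a0 b0|i /f_gt0 //]; by rewrite lt_min a0.
Qed.

End FiniteBounds.

Local Notation nbhs_ge0 t := (within (fun h => 0 <= t + h) (dnbhs 0)).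

Section DerivativeOnNonnegatives.
Variable R : realType.
Implicit Types (f g : R -> R) (t l : R).

Definition is_derive_ge0 f t l : Prop :=
  (fun h => h^-1 * (f (t + h) - f t)) @ nbhs_ge0 t --> l.

Lemma nbhs_ge0P t (G : R -> Prop) : (\forall h \near nbhs_ge0 t, G h) ->
  exists2 e : R, 0 < e & forall h : R, `|h| < e -> h != 0 -> 0 <= t + h -> G h.
Proof.
rewrite near_withinE /dnbhs /= near_withinE => /nbhs_ballP[e e0 Ge].
by exists e => // h he hn th; apply: Ge => //; rewrite /ball /= sub0r normrN.
Qed.

Lemma is_derive_ge0_cst (m : R) t : is_derive_ge0 (fun _ => m) t 0.
Proof.
rewrite /is_derive_ge0 (_ : (fun h => h^-1 * _) = cst 0); first exact: cvg_cst.
by apply: funext => h; rewrite subrr mulr0.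
Qed.

Lemma is_derive_ge0B f g t l k : is_derive_ge0 f t l -> is_derive_ge0 g t k ->
  is_derive_ge0 (fun s => f s - g s) t (l - k).
Proof.
move=> fl gk; apply: cvg_trans _ (cvgB fl gk); apply: near_eq_cvg.
by apply: nearW => h; rewrite !fctE; ring.
Qed.

Lemma is_derive_ge0P f t l : is_derive t 1 f l -> is_derive_ge0 f t l.
Proof.
case=> df <-; rewrite /is_derive_ge0.
have -> : (fun h : R => h^-1 * (f (t + h) - f t)) =
    (fun h => h^-1 *: ((f \o shift t) (h *: 1) - f t)).
  by apply: funext => h /=; rewrite /shift /= [h%:A]mulr1 [h + t]addrC.
by apply: cvg_trans df; apply: cvg_app; exact: cvg_within.
Qed.

Lemma is_derive_ge0_cvg f t l :
  is_derive_ge0 f t l -> (fun h => f (t + h)) @ nbhs_ge0 t --> f t.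
Proof.
move=> fl; have h0 : id @ nbhs_ge0 t --> (0 : R).
  by apply: cvg_within_filter; apply: cvg_within_filter; exact: cvg_id.
have lim : (fun h => f t + h * (h^-1 * (f (t + h) - f t))) @ nbhs_ge0 t
    --> f t + 0 * l := cvgD (cvg_cst _) (cvgM h0 fl).
rewrite mul0r addr0 in lim.
suff -> : (fun h => f (t + h)) = (fun h => f t + h * (h^-1 * (f (t + h) - f t))).
  exact: lim.
apply: funext => h; have [->|hn0] := eqVneq h 0; first by rewrite addr0 !mul0r addr0.
by rewrite mulVKf // subrKC.
Qed.

Lemma is_derive_ge0_below_line f s l (c k : R) : is_derive_ge0 f s l -> 0 <= k ->
  f s <= c -> (f s = c -> l < k) ->
  \forall h \near nbhs_ge0 s, 0 < h -> f (s + h) <= c + k * h.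
Proof.
move=> fl k0 fsc fsc_lk; have [fsc_eq|fsc_neq] := eqVneq (f s) c.
  apply: filterS (cvgr_lt l fl k (fsc_lk fsc_eq)) => h qk h0.
  have : h * (h^-1 * (f (s + h) - f s)) <= h * k by rewrite ler_pM2l // ltW.
  by rewrite mulVKf ?gt_eqF // -fsc_eq [k * h]mulrC; lra.
have fsc_lt : f s < c by rewrite lt_neqAle fsc_neq fsc.
apply: filterS (cvgr_lt (f s) (is_derive_ge0_cvg fl) c fsc_lt) => h fc h0.
have : 0 <= k * h by rewrite mulr_ge0 // ltW.
lra.
Qed.

Lemma is_derive_ge0_gt_left f s l (c : R) : is_derive_ge0 f s l -> 0 < s ->
  c < f s -> exists2 u, 0 <= u < s & c < f u.
Proof.
move=> fl s0 cfs; have [e e0 Ge] := nbhs_ge0P (cvgr_gt (f s) (is_derive_ge0_cvg fl) c cfs).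
set m := Num.min e s.
have [me ms] : m <= e /\ m <= s by rewrite !ge_min !lexx orbT.
have m0 : 0 < m by rewrite lt_min e0 s0.
exists (s - m / 2); first by apply/andP; split; lra.
apply: Ge; last by lra.
  by rewrite normrN gtr0_norm ?divr_gt0 //; lra.
by rewrite oppr_eq0 gt_eqF // divr_gt0.
Qed.

End DerivativeOnNonnegatives.

Section MaximumPrinciple.
Variables (R : realType) (X : finType).

(* Real induction gives [d t <= eps * (1 + t)] for every [eps > 0]: where the
   bound is attained, [d t y > 0] is maximal, so [D t y <= 0 < eps] and [d] stays
   below the line just after [t]. *)
Lemma max_principle (d D : R -> X -> R) (t0 : R) : 0 <= t0 ->
  (forall z, d 0 z <= 0) ->
  (forall (t : R) z, 0 <= t <= t0 -> is_derive_ge0 (d^~ z) t (D t z)) ->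
  (forall (t : R) z, 0 <= t < t0 -> 0 < d t z -> (forall y, d t y <= d t z) ->
     D t z <= 0) ->
  forall z, d t0 z <= 0.
Proof.
move=> t0_ge0 d0_le0 dD Dmax z; apply/ler_addgt0Pr => e e0; rewrite add0r.
pose eps : R := e / (1 + t0).
have eps0 : 0 < eps by rewrite divr_gt0 //; lra.
suff : d t0 z <= eps * (1 + t0) by rewrite /eps mulfVK // gt_eqF //; lra.
pose good t := forall y, d t y <= eps * (1 + t).
apply: (@real_induction _ good 0 t0) => //.
- by move=> y; apply: le_trans (d0_le0 y) _; rewrite mulr_ge0 //; lra.
- move=> s s0 st good_s.
  have : \forall h \near nbhs_ge0 s,
      forall y, 0 < h -> d (s + h) y <= eps * (1 + s) + eps * h.
    apply: filter_forall => y; apply: (is_derive_ge0_below_line (dD s y _)).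
    + by rewrite s0 ltW.
    + exact: (ltW eps0).
    + exact: good_s.
    move=> tight; apply: (le_lt_trans _ eps0); apply: (Dmax s y); first by rewrite s0.
      by rewrite tight; apply: mulr_gt0; [exact: eps0 | lra].
    by move=> y'; rewrite tight; exact: good_s.
  move=> /nbhs_ge0P[e' e'0 near_s]; exists e' => // h h0 he' y.
  have := near_s h; rewrite gtr0_norm // => /(_ he' (lt0r_neq0 h0)).
  have sh : 0 <= s + h by lra.
  by move=> /(_ sh y h0); lra.
- move=> s s0 st below_s y; rewrite leNgt; apply/negP => bad.
  have s_in : 0 <= s <= t0 by rewrite st ltW.
  have [u /andP[u0 us] bad_u] := is_derive_ge0_gt_left (dD s y s_in) s0 bad.
  have := below_s u u0 us y.
  have : eps * (1 + u) <= eps * (1 + s) by rewrite ler_pM2l //; lra.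
  lra.
Qed.

End MaximumPrinciple.

Section Comparison.
Variables (R : realType) (X : finType) (Q : (X -> R) -> X -> R).
Hypothesis HQ : lower_rate_op Q.

Lemma lrate_comparison (u v du dv : R -> X -> R) (t0 : R) : 0 <= t0 ->
  (forall z, u 0 z <= v 0 z) ->
  (forall (t : R) z, 0 <= t <= t0 -> is_derive_ge0 (u^~ z) t (du t z)) ->
  (forall (t : R) z, 0 <= t <= t0 -> is_derive_ge0 (v^~ z) t (dv t z)) ->
  (forall (t : R) z, 0 <= t < t0 -> du t z <= Q (u t) z) ->
  (forall (t : R) z, 0 <= t < t0 -> Q (v t) z <= dv t z) ->
  forall z, u t0 z <= v t0 z.
Proof.
move=> t0_ge0 uv0 udu vdv u_sub v_super z; rewrite -subr_le0.
apply: (@max_principle _ _ (fun t z => u t z - v t z) (fun t z => du t z - dv t z)) => //.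
- by move=> y; rewrite subr_le0.
- by move=> t y t_in; apply: is_derive_ge0B; [exact: udu | exact: vdv].
move=> t y t_in _ y_max; rewrite subr_le0.
apply: le_trans (u_sub t y t_in) _; apply: le_trans (v_super t y t_in).
exact: lrate_le_at_max.
Qed.

End Comparison.

Section ExpCoeffDerivative.
Variable R : realType.

Lemma is_derive_scale (d s : R) : is_derive s 1 ( *%R d) d.
Proof.
by have := is_deriveZ d (is_derive_id s (1 : R)); rewrite [d *: 1]mulr1.
Qed.

Lemma is_derive_exp_coeffS (d s : R) k :
  is_derive s 1 (fun s => exp_coeff (d * s) k.+1) (d * exp_coeff (d * s) k).
Proof.
have := is_deriveZ (k.+1`!%:R^-1) (is_deriveX k.+1 (is_derive_scale d s)).
have -> : (k.+1`!%:R^-1 \*: ( *%R d) ^+ k.+1) = (fun s => exp_coeff (d * s) k.+1).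
  by apply/funext => x; rewrite /exp_coeff /= mulrC exprfctE.
move=> /is_derive_eq; apply; rewrite /exp_coeff /= factS natrM invfM.
rewrite /GRing.scale /=; field.
by rewrite pnatr_eq0 -lt0n fact_gt0 addrC natr1 pnatr_eq0.
Qed.

Lemma is_derive_exp_coeff_sum (d s : R) n (b : nat -> R) :
  is_derive s 1 (fun s => \sum_(k < n.+1) b k * exp_coeff (d * s) k)
    (\sum_(k < n) b k.+1 * (d * exp_coeff (d * s) k)).
Proof.
have -> : (fun s => \sum_(k < n.+1) b k * exp_coeff (d * s) k) =
    cst (b 0%N) + \sum_(k < n) (b k.+1 \*: (fun s => exp_coeff (d * s) k.+1)).
  apply/funext => x; rewrite big_ord_recl fct_sumE /= /exp_coeff /=.
  by rewrite expr0 fact0 divr1 mulr1.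
rewrite -[X in is_derive _ _ _ X]add0r; apply: is_deriveD.
apply: is_derive_sum => k; exact: is_deriveZ (is_derive_exp_coeffS d s k).
Qed.

End ExpCoeffDerivative.

Section ReachSeq.
Variables (R : realType) (X : finType) (Q : (X -> R) -> X -> R) (A : {set X}).
Hypothesis HQ : lower_rate_op Q.
Local Notation A_ k := (reach_seq Q A k).

Lemma reach_seqS k : (A_ k \subset A_ k.+1)%SET.
Proof. exact: finset.subsetUl. Qed.

Lemma reach_seq_homo : {homo (fun k => A_ k) : j k / (j <= k)%N >-> (j \subset k)%SET}.
Proof.
apply: homo_leq => [B|B B' B''|k]; [exact: subxx | exact: fintype.subset_trans | exact: reach_seqS].
Qed.

Lemma reach_seq_new k y : y \notin A_ k -> y \in A_ k.+1 ->
  0 < Q (indic R (A_ k)) y.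
Proof. by move=> yk; rewrite /= finset.in_setU (negbTE yk) finset.in_set => /andP[]. Qed.

Lemma reach_seq_stable : exists n : nat, reach_seq Q A n == reach_seq Q A n.+1.
Proof.
apply: contrapT => /forallNP never_stable.
have card_ge k : (k <= #|A_ k|)%N.
  elim: k => // k IHk; apply: leq_ltn_trans IHk (proper_card _).
  by rewrite finset.properEneq reach_seqS andbT; apply/negP; exact: never_stable.
by have := card_ge #|X|.+1; rewrite ltnNge max_card.
Qed.

Lemma reach_seq_first_stable : exists n, A_ n = A_ n.+1 /\
  forall m, (m < n)%N -> A_ m <> A_ m.+1.
Proof.
have [n /eqP stable n_min] := ex_minnP reach_seq_stable.
by exists n; split => // m mn /eqP /n_min; rewrite leqNgt mn.
Qed.

Lemma lrate_indic_stable_le0 n : A_ n = A_ n.+1 ->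
  forall z, Q (indic R (A_ n)) z <= 0.
Proof.
move=> stable; apply: lrate_indic_le0 => // y yn; rewrite leNgt; apply/negP => Qy.
by move: yn; rewrite stable /= finset.in_setU finset.in_set Qy; case: (y \in A_ n).
Qed.

End ReachSeq.

Section Subsolution.
Variables (R : realType) (X : finType) (Q : (X -> R) -> X -> R) (A : {set X}).
Variables (n : nat) (c d : R).
Hypotheses (HQ : lower_rate_op Q) (d_gt0 : 0 < d)
  (Q_lb : forall (B : {set X}) y, - c <= Q (indic R B) y)
  (Q_new_lb : forall (B : {set X}) y, y \notin B -> 0 < Q (indic R B) y ->
     d <= Q (indic R B) y).
Local Notation I_ k := (indic R (reach_seq Q A k)).

Lemma reach_seq_rate_lb k y : d * I_ k.+1 y <= Q (I_ k) y + (c + d) * I_ k y.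
Proof.
have [yk|yk] := boolP (y \in reach_seq Q A k).
  have yk1 := fintype.subsetP (reach_seqS Q A k) y yk.
  by rewrite /indic yk yk1 !mulr1; have := Q_lb (reach_seq Q A k) y; lra.
have Ik0 : I_ k y = 0 by rewrite /indic (negbTE yk).
rewrite Ik0 mulr0 addr0; have [yk1|yk1] := boolP (y \in reach_seq Q A k.+1).
  by rewrite /indic yk1 mulr1; apply: Q_new_lb => //; exact: reach_seq_new.
rewrite /indic (negbTE yk1) mulr0; apply: lrate_ge0_at_zero => // z.
exact: indic_ge0.
Qed.

Definition reach_subsol (s : R) (y : X) : R :=
  expR (- (c + d) * s) * \sum_(k < n.+1) I_ k y * exp_coeff (d * s) k.

Lemma reach_subsolE s : reach_subsol s =
  (fun y => \sum_(k < n.+1) (expR (- (c + d) * s) * exp_coeff (d * s) k) * I_ k y).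
Proof.
apply/funext => y; rewrite /reach_subsol mulr_sumr.
by apply: eq_bigr => k _; rewrite [I_ k y * _]mulrC mulrA.
Qed.

Lemma is_derive_reach_subsol (s : R) (y : X) : is_derive s 1 (reach_subsol^~ y)
  (- (c + d) * reach_subsol s y +
   expR (- (c + d) * s) * \sum_(k < n) I_ k.+1 y * (d * exp_coeff (d * s) k)).
Proof.
have dexp := is_derive1_comp (is_derive_expR (- (c + d) * s)) (is_derive_scale (- (c + d)) s).
have := is_deriveM dexp (is_derive_exp_coeff_sum d s n (fun k => I_ k y)).
move=> /is_derive_eq; apply; rewrite /reach_subsol /GRing.scale /=; ring.
Qed.

Lemma reach_subsol_sub (s : R) y : 0 <= s ->
  - (c + d) * reach_subsol s y +
  expR (- (c + d) * s) * \sum_(k < n) I_ k.+1 y * (d * exp_coeff (d * s) k)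
  <= Q (reach_subsol s) y.
Proof.
move=> s0; set e := expR _; have e0 : 0 <= e := ltW (expR_gt0 _).
have a0 k : 0 <= exp_coeff (d * s) k by rewrite exp_coeff_ge0 // mulr_ge0 // ltW.
have rate_lb : \sum_(k < n) I_ k.+1 y * (d * exp_coeff (d * s) k) <=
    \sum_(k < n.+1) exp_coeff (d * s) k * Q (I_ k) y +
    (c + d) * \sum_(k < n.+1) I_ k y * exp_coeff (d * s) k.
  apply: le_trans (_ : \sum_(k < n.+1) I_ k.+1 y * (d * exp_coeff (d * s) k) <= _).
    by rewrite big_ord_recr /= lerDl mulr_ge0 ?indic_ge0 // mulr_ge0 // ltW.
  rewrite mulr_sumr -big_split /=; apply: ler_sum => k _.
  have := ler_wpM2l (a0 k) (reach_seq_rate_lb k y).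
  by rewrite mulrDr; congr (_ <= _); ring.
have Q_sub : e * \sum_(k < n.+1) exp_coeff (d * s) k * Q (I_ k) y <= Q (reach_subsol s) y.
  rewrite reach_subsolE mulr_sumr; apply: le_trans (lrate_sum HQ _ _ _).
  rewrite [X in X <= _](eq_bigr (fun k : 'I_n.+1 =>
    Q (fun z => (e * exp_coeff (d * s) k) * I_ k z) y)) // => k _.
  rewrite (lrate_scale HQ); last exact: mulr_ge0 e0 (a0 k).
  by rewrite mulrA.
have := ler_wpM2l e0 rate_lb; rewrite /reach_subsol -/e.
lra.
Qed.

Lemma reach_subsol0 : reach_subsol 0 = indic R A.
Proof.
apply/funext => y; rewrite /reach_subsol mulr0 expR0 mul1r big_ord_recl big1 ?addr0.
  by rewrite /exp_coeff /= expr0 fact0 divr1 mulr1.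
by move=> k _; rewrite /exp_coeff /= mulr0 expr0n /= !mul0r mulr0.
Qed.

Lemma reach_subsol_gt0 (s : R) x : 0 < s -> x \in reach_seq Q A n ->
  0 < reach_subsol s x.
Proof.
move=> s0 xn; rewrite /reach_subsol pmulr_rgt0 ?expR_gt0 // big_ord_recr /=.
apply: ltr_wpDl.
  apply: sumr_ge0 => k _; rewrite mulr_ge0 ?indic_ge0 // exp_coeff_ge0 //.
  by rewrite mulr_ge0 // ltW.
rewrite /indic xn mul1r /exp_coeff /= divr_gt0 ?ltr0n ?fact_gt0 //.
by rewrite exprn_gt0 // mulr_gt0.
Qed.

End Subsolution.

Section Semigroup.
Variables (R : realType) (X : finType) (Q : (X -> R) -> X -> R)
  (T : R -> (X -> R) -> X -> R).
Hypotheses (HQ : lower_rate_op Q) (HT : solves_semigroup_ode Q T).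

Lemma semigroup_le_indic (A B : {set X}) (t : R) : 0 <= t -> (A \subset B)%SET ->
  (forall z, Q (indic R B) z <= 0) -> forall z, T t (indic R A) z <= indic R B z.
Proof.
move=> t0 AB QB.
apply: (lrate_comparison HQ (u := fun s => T s (indic R A)) (v := fun _ => indic R B)
  (du := fun s => Q (T s (indic R A))) (dv := fun _ _ => 0)) => //.
- by move=> z; have [-> _] := HT (indic R A); exact: indic_subset.
- by move=> s z /andP[s0 _]; have [_] := HT (indic R A); apply.
- by move=> s z _; exact: is_derive_ge0_cst.
Qed.

Lemma semigroup_reach_gt0 (A : {set X}) n (t : R) x : 0 < t ->
  x \in reach_seq Q A n -> 0 < T t (indic R A) x.
Proof.
move=> t0 xn.
have [c c_lb] := finite_lower_bound (fun p : {set X} * X => Q (indic R p.1) p.2).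
have [p /andP[] // | d d0 d_lb] := @finite_pos_lower_bound _ _
  (fun p : {set X} * X => (p.2 \notin p.1) && (0 < Q (indic R p.1) p.2))
  (fun p => Q (indic R p.1) p.2).
have Q_lb (B : {set X}) y : - c <= Q (indic R B) y := c_lb (B, y).
have Q_new_lb (B : {set X}) y : y \notin B -> 0 < Q (indic R B) y -> d <= Q (indic R B) y.
  by move=> yB Qy; apply: (d_lb (B, y)); rewrite /= yB Qy.
apply: lt_le_trans (reach_subsol_gt0 c d0 t0 xn) _.
apply: (lrate_comparison HQ (v := fun s => T s (indic R A))
  (dv := fun s => Q (T s (indic R A))) (ltW t0)) => [z|s z _|s z /andP[s0 _]|s z /andP[s0 _]|//].
- by rewrite reach_subsol0; have [-> _] := HT (indic R A).
- exact/is_derive_ge0P/is_derive_reach_subsol.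
- by have [_ dT] := HT (indic R A); exact: dT.
- exact: (reach_subsol_sub A n HQ d0 Q_lb Q_new_lb).
Qed.

End Semigroup.

Theorem proposition12 (R : realType) (X : finType)
    (Q : (X -> R) -> (X -> R)) (T : R -> (X -> R) -> (X -> R)) :
  lower_rate_op Q ->
  solves_semigroup_ode Q T ->
  forall (t : R), 0 < t -> forall (x : X) (A : {set X}),
    0 < T t (@indic R X A) x <-> lower_reachable Q A x.
Proof.
move=> HQ HT t t0 x A; split => [Tx_gt0 | [n [_ _ xn]]]; last first.
  exact: (semigroup_reach_gt0 HQ HT t0 xn).
have [n [stable n_first]] := reach_seq_first_stable Q A.
exists n; split => //; apply: contraLR Tx_gt0 => xn; rewrite -leNgt.
apply: le_trans (semigroup_le_indic HQ HT (ltW t0) (reach_seq_homo Q A (leq0n n))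
  (lrate_indic_stable_le0 HQ stable) x) _.
by rewrite /indic (negbTE xn).
Qed.
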